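(* Let $A \in \mathbb{R}^{p \times n}$ have all entries nonnegative, let $1 \leq k \leq p$, and let $\widetilde{x} \in \{0,1\}^n$. Then for all $x \in \{0,1\}^n$, $$Q_k(Ax) \geq Q_k(A\widetilde{x})\left(\sum_{i=1}^n \widetilde{x}_i x_i - \sum_{i=1}^n \widetilde{x}_i + 1\right),$$ and this inequality holds with equality for $x = \widetilde{x}$.
   Context: For $y \in \mathbb{R}^p$ and an integer $1 \leq k \leq p$, $Q_k(y)$ denotes the $k$-th largest entry of $y$ (entries counted with multiplicity). *)

From mathcomp Require Import all_boot all_order all_algebra.
Set Implicit Arguments. Unset Strict Implicit. Unset Printing Implicit Defensive.
Import Order.TTheory GRing.Theory Num.Theory.
Local Open Scope ring_scope.

(* Q_k(y): the k-th largest entry of the column vector y in R^p (entries counted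
   with multiplicity), k numbered from 1: sort entries in nonincreasing order and
   take the element at position k-1. *)
Definition Qk (R : realFieldType) (p : nat) (k : nat) (y : 'cV[R]_p) : R :=
  nth 0 (sort (fun a b : R => b <= a) [seq y i 0 | i <- enum 'I_p]) k.-1.

Definition is01 (R : realFieldType) (n : nat) (x : 'cV[R]_n) : Prop :=
  forall i : 'I_n, x i 0 = 0 \/ x i 0 = 1.

From mathcomp Require Import all_boot all_order all_algebra.
From mathcomp Require Import lra.
Set Implicit Arguments. Unset Strict Implicit. Unset Printing Implicit Defensive.
Import Order.TTheory GRing.Theory Num.Theory.
Local Open Scope ring_scope.

(* Q_k is monotone, and nonnegative on nonnegative vectors.  If every 1 of xt
   is also a 1 of x, then A x >= A xt entrywise and the factor on the right is
   1; otherwise the factor is at most 0 while Q_k(A x) >= 0. *)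

Section SortedNth.
Context {disp : Order.disp_t} {T : orderType disp} (x0 : T).

Lemma count_lt_nth_leq (s : seq T) (j : nat) :
  sorted <=%O s -> (count (< nth x0 s j)%O s <= j)%N.
Proof.
move=> s_sorted; rewrite leqNgt; apply/negP.
by move=> /(nth_count_lt x0 s_sorted); rewrite ltxx.
Qed.

Lemma nth_sort_map_le (I : Type) (r : seq I) (f g : I -> T) (j : nat) :
  (forall i, f i <= g i)%O ->
  (nth x0 (sort <=%O (map f r)) j <= nth x0 (sort <=%O (map g r)) j)%O.
Proof.
move=> le_fg; have [j_lt|j_ge] := ltnP j (size r); last first.
  by rewrite !nth_default ?size_sort ?size_map.
apply: nth_count_ge; first exact: sort_le_sorted.
rewrite size_sort size_map j_lt andbT.
apply: leq_trans _ (count_lt_nth_leq j (sort_le_sorted (map f r))).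
by rewrite !count_sort !count_map; apply: sub_count => i /=; apply: le_lt_trans.
Qed.

End SortedNth.

Section KthLargest.
Variables (R : realFieldType) (p : nat).

(* Sorting by [>=] on [R] is sorting by [<=] on the dual order [R^d]. *)
Lemma QkE (k : nat) (y : 'cV[R]_p) :
  Qk k y = nth 0 (sort <=%O [seq (y i 0 : R^d) | i <- enum 'I_p]) k.-1.
Proof. by []. Qed.

Lemma Qk_le (k : nat) (y z : 'cV[R]_p) :
  (forall i, y i 0 <= z i 0) -> Qk k y <= Qk k z.
Proof.
by move=> le_yz; rewrite !QkE; apply: (nth_sort_map_le (T := R^d)).
Qed.

Lemma Qk_ge0 (k : nat) (y : 'cV[R]_p) : (forall i, 0 <= y i 0) -> 0 <= Qk k y.
Proof.
move=> y_ge0; rewrite /Qk; set s := sort _ _.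
have [k_lt|k_ge] := ltnP k.-1 (size s); last by rewrite nth_default.
by move: (mem_nth 0 k_lt); rewrite mem_sort => /mapP[i _ ->].
Qed.

End KthLargest.

Section NonnegativeMatrix.
Variables (R : realFieldType) (p n : nat) (A : 'M[R]_(p, n)).
Hypothesis A_ge0 : forall i j, 0 <= A i j.

Lemma mulmx_nonneg_le (x y : 'cV[R]_n) :
  (forall j, x j 0 <= y j 0) -> forall i, (A *m x) i 0 <= (A *m y) i 0.
Proof.
by move=> le_xy i; rewrite !mxE; apply: ler_sum => j _; apply: ler_wpM2l.
Qed.

Lemma mulmx_nonneg_ge0 (x : 'cV[R]_n) :
  (forall j, 0 <= x j 0) -> forall i, 0 <= (A *m x) i 0.
Proof.
by move=> x_ge0 i; rewrite mxE; apply: sumr_ge0 => j _; apply: mulr_ge0.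
Qed.

End NonnegativeMatrix.

Section ZeroOneVectors.
Variables (R : realFieldType) (n : nat).

Lemma is01_ge0 (x : 'cV[R]_n) : is01 x -> forall i, 0 <= x i 0.
Proof. by move=> x01 i; case: (x01 i) => ->. Qed.

Lemma sum_mul01_id (xt x : 'cV[R]_n) : is01 xt -> is01 x ->
  (forall i, xt i 0 <= x i 0) ->
  \sum_(i < n) xt i 0 * x i 0 = \sum_(i < n) xt i 0.
Proof.
move=> xt01 x01 le_xt_x; apply: eq_bigr => i _.
move: (le_xt_x i); case: (xt01 i) => ->; case: (x01 i) => ->;
  by rewrite ?mul0r ?mulr1 ?ler10.
Qed.

Lemma sum_mul01_le (xt x : 'cV[R]_n) (i0 : 'I_n) : is01 xt -> is01 x ->
  x i0 0 < xt i0 0 ->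
  \sum_(i < n) xt i 0 * x i 0 <= \sum_(i < n) xt i 0 - 1.
Proof.
move=> xt01 x01 lt_i0.
have term_ge0 i : 0 <= xt i 0 - xt i 0 * x i 0.
  case: (xt01 i) => ->; case: (x01 i) => ->;
  by rewrite ?mul0r ?mulr0 ?mulr1 ?subrr ?subr0.
have term_i0 : xt i0 0 - xt i0 0 * x i0 0 = 1.
  move: lt_i0; case: (xt01 i0) => ->; case: (x01 i0) => ->;
  by rewrite ?ltxx ?ltr10 ?mulr0 ?subr0.
suff : 1 <= \sum_(i < n) (xt i 0 - xt i 0 * x i 0) by rewrite sumrB; lra.
by rewrite (bigD1 i0) //= term_i0 lerDl; apply: sumr_ge0.
Qed.

End ZeroOneVectors.

Theorem theorem5 (R : realFieldType) (p n : nat) (A : 'M[R]_(p, n)) (k : nat)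
  (xt : 'cV[R]_n) :
  (forall i j, 0 <= A i j) -> (1 <= k <= p)%N -> is01 xt ->
  (forall x : 'cV[R]_n, is01 x ->
     Qk k (A *m x) >=
     Qk k (A *m xt) * (\sum_(i < n) xt i 0 * x i 0 - \sum_(i < n) xt i 0 + 1))
  /\
  Qk k (A *m xt) =
     Qk k (A *m xt) * (\sum_(i < n) xt i 0 * xt i 0 - \sum_(i < n) xt i 0 + 1).
Proof.
move=> A_ge0 _ xt01.
split; last by rewrite sum_mul01_id // subrr add0r mulr1.
move=> x x01.
have [le_xt_x|/forallPn[i0]] := boolP [forall i, xt i 0 <= x i 0].
  move/forallP: le_xt_x => le_xt_x.
  rewrite sum_mul01_id // subrr add0r mulr1.
  exact/Qk_le/mulmx_nonneg_le.
rewrite -ltNge => lt_i0.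
have factor_le0 : \sum_(i < n) xt i 0 * x i 0 - \sum_(i < n) xt i 0 + 1 <= 0.
  by have := sum_mul01_le xt01 x01 lt_i0; lra.
apply: le_trans (Qk_ge0 _ (mulmx_nonneg_ge0 A_ge0 (is01_ge0 x01))).
exact: mulr_ge0_le0 (Qk_ge0 _ (mulmx_nonneg_ge0 A_ge0 (is01_ge0 xt01))) factor_le0.
Qed.
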